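(* Let $m\ge1$, $x_0\in S^m_1$, and let $u\colon[0,\tau]\to\mathbb R^{m+1}_1$ be absolutely continuous with $\langle u(t),x_0\rangle_J=0$ for all $t$. Let $(s,R)\colon[0,\tau]\to\mathbb R^{m+1}\times GL(m+1)$ be the absolutely continuous solution of $$\dot s(t)=u(t),\qquad \dot R(t)=R(t)\big(u(t)x_0^{\mathbf t}-x_0u(t)^{\mathbf t}\big)J,\qquad s(0)=0,\ R(0)=I_{m+1}.$$ Then $R(t)\in O^{++}_1(m+1)$ for all $t$, and with $x(t)=R(t)x_0$ and $g(t)=(s(t),R(t)^{-1})$, the curve $(x,g)$ is a $G$-rolling of $M=S^m_1$ on $\widehat M=T^{\mathrm{aff}}_{x_0}S^m_1$ without slipping or twisting (for any of the three choices of $G_1(m+1)$), with development $\widehat x(t)=s(t)+x_0$.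
   Context: $\mathbb R^{m+1}_1$ is $\mathbb R^{m+1}$ with $\langle x,y\rangle_J=x^{\mathbf t}Jy$, $J=\mathrm{diag}(-1,I_m)$. The Lorentzian sphere is $S^m_1=\{x\in\mathbb R^{m+1}_1:\langle x,x\rangle_J=1\}$; $T_{x_0}S^m_1=\{v:\langle v,x_0\rangle_J=0\}$ and $T^{\mathrm{aff}}_{x_0}S^m_1=x_0+T_{x_0}S^m_1$ (the affine tangent space, a pseudo-Riemannian submanifold of the same dimension and index). $O_1(m+1)=\{X:X^{\mathbf t}JX=J\}$; writing $X$ in blocks with upper-left $1\times1$ block $X_T$ and lower-right $m\times m$ block $X_S$, $O^{++}_1(m+1)$ is the set with $X_T>0$ and $\det X_S>0$. $G_1(m+1)$ is one of $O^{++}\cup O^{--}$, $O^{++}\cup O^{+-}$, $O^{++}\cup O^{-+}$ (corresponding to orientation, time-orientation, space-orientation). The group $\mathbb R^{m+1}_1\rtimes G_1(m+1)$ acts by $(s,A)x=s+Ax$, so $d_xg=A$ for $g=(s,A)$. Definition (rolling). For connected $G$-oriented pseudo-Riemannian submanifolds $M,\widehat M\subset\mathbb R^n_\nu$ of equal dimension and index, a $G$-rolling of $M$ on $\widehat M$ without slipping or twisting is an absolutely continuous curve $(x,g)\colon[0,\tau]\to M\times(\mathbb R^n_\nu\rtimes G_\nu(n))$ such that for a.e. $t$: (i) $\widehat x(t):=g(t)x(t)\in\widehat M$; (ii) $d_{x(t)}g(t)T_{x(t)}M=T_{\widehat x(t)}\widehat M$; (iii) $d_{x(t)}g(t)|_{T_{x(t)}M}$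 preserves $G$-orientation; (iv) $\dot{\widehat x}(t)=d_{x(t)}g(t)\dot x(t)$; (v) $d_{x(t)}g(t)\frac{D}{dt}Z=\frac{D}{dt}(d_{x(t)}g(t)Z)$ for every tangent field $Z$ along $x$; (vi) $d_{x(t)}g(t)\frac{D^\perp}{dt}\Psi=\frac{D^\perp}{dt}(d_{x(t)}g(t)\Psi)$ for every normal field $\Psi$ along $x$. Here $\frac{D}{dt}$ is the tangential projection of the ambient derivative and $\frac{D^\perp}{dt}$ the normal projection. *)

(* Vectors of R^{m+1} are
   functions nat -> R (only indices 0..m matter), matrices are nat -> nat -> R
   (only indices 0..m matter).  All equalities of vectors/matrices are
   entrywise on the indices 0..m. *)
From Stdlib Require Import Reals.
Open Scope R_scope.

Definition vec := nat -> R.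
Definition mat := nat -> nat -> R.

Definition Jsign (i : nat) : R := match i with O => -1 | _ => 1 end.

Definition dotJ (m : nat) (x y : vec) : R :=
  sum_f_R0 (fun i => Jsign i * x i * y i) m.

Definition vzero : vec := fun _ => 0.
Definition vadd (x y : vec) : vec := fun i => x i + y i.
Definition vsub (x y : vec) : vec := fun i => x i - y i.

Definition vecEq (m : nat) (x y : vec) : Prop :=
  forall i, (i <= m)%nat -> x i = y i.
Definition matEq (m : nat) (A B : mat) : Prop :=
  forall i j, (i <= m)%nat -> (j <= m)%nat -> A i j = B i j.

Definition mv (m : nat) (A : mat) (x : vec) : vec :=
  fun i => sum_f_R0 (fun j => A i j * x j) m.
Definition mm (m : nat) (A B : mat) : mat :=
  fun i k => sum_f_R0 (fun j => A i j * B j k) m.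
Definition trm (A : mat) : mat := fun i j => A j i.
Definition Imat : mat := fun i j => if Nat.eqb i j then 1 else 0.
Definition Jmat : mat := fun i j => if Nat.eqb i j then Jsign i else 0.
Definition wedge (u x0 : vec) : mat := fun i j => u i * x0 j - x0 i * u j.

(* determinant of the n x n matrix with entries A i j, 0 <= i,j < n,
   by Laplace expansion along the first row *)
Definition minor0 (j : nat) (A : mat) : mat :=
  fun i k => A (S i) (if Nat.ltb k j then k else S k).
Fixpoint det (n : nat) (A : mat) : R :=
  match n with
  | O => 1
  | S n' => sum_f_R0 (fun j => (-1) ^ j * A O j * det n' (minor0 j A)) n'
  end.

Definition blockT (X : mat) : R := X O O.
Definition blockS (X : mat) : mat := fun i j => X (S i) (S j).

Definition GLmat (m : nat) (X : mat) : Prop :=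
  exists Y, matEq m (mm m X Y) Imat /\ matEq m (mm m Y X) Imat.

Definition O1 (m : nat) (X : mat) : Prop :=
  matEq m (mm m (trm X) (mm m Jmat X)) Jmat.
Definition Opp (m : nat) (X : mat) : Prop :=
  O1 m X /\ 0 < blockT X /\ 0 < det m (blockS X).
Definition Omm (m : nat) (X : mat) : Prop :=
  O1 m X /\ blockT X < 0 /\ det m (blockS X) < 0.
Definition Opm (m : nat) (X : mat) : Prop :=
  O1 m X /\ 0 < blockT X /\ det m (blockS X) < 0.
Definition Omp (m : nat) (X : mat) : Prop :=
  O1 m X /\ blockT X < 0 /\ 0 < det m (blockS X).

Inductive Gchoice := Gorient | Gtime | Gspace.
Definition inG (c : Gchoice) (m : nat) (X : mat) : Prop :=
  match c with
  | Gorient => Opp m X \/ Omm m X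
  | Gtime   => Opp m X \/ Opm m X
  | Gspace  => Opp m X \/ Omp m X
  end.

Definition gact (m : nat) (s : vec) (A : mat) (x : vec) : vec :=
  vadd s (mv m A x).

Definition inI (tau t : R) : Prop := 0 <= t <= tau.

Definition AC (tau : R) (f : R -> R) : Prop :=
  forall eps, 0 < eps -> exists delta, 0 < delta /\
    forall (n : nat) (a b : nat -> R),
      0 <= a O ->
      (forall k, (k <= n)%nat -> a k <= b k) ->
      (forall k, (k < n)%nat -> b k <= a (S k)) ->
      b n <= tau ->
      sum_f_R0 (fun k => b k - a k) n < delta ->
      sum_f_R0 (fun k => Rabs (f (b k) - f (a k))) n < eps.

Definition ACv (m : nat) (tau : R) (x : R -> vec) : Prop :=
  forall i, (i <= m)%nat -> AC tau (fun t => x t i).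
Definition ACm (m : nat) (tau : R) (A : R -> mat) : Prop :=
  forall i j, (i <= m)%nat -> (j <= m)%nat -> AC tau (fun t => A t i j).

Definition null (N : R -> Prop) : Prop :=
  forall eps, 0 < eps -> exists c d : nat -> R,
    (forall k, c k <= d k) /\
    (forall t, N t -> exists k, c k <= t <= d k) /\
    (forall n, sum_f_R0 (fun k => d k - c k) n < eps).

Definition AE (tau : R) (P : R -> Prop) : Prop :=
  exists N, null N /\ forall t, inI tau t -> ~ N t -> P t.

Definition vderiv (m : nat) (x : R -> vec) (t : R) (xd : vec) : Prop :=
  forall i, (i <= m)%nat -> derivable_pt_lim (fun r => x r i) t (xd i).
Definition mderiv (m : nat) (A : R -> mat) (t : R) (Ad : mat) : Prop :=
  forall i j, (i <= m)%nat -> (j <= m)%nat ->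
    derivable_pt_lim (fun r => A r i j) t (Ad i j).

(* A pseudo-Riemannian hypersurface of R^{m+1}_1 given by:
   pt p       : p lies on the hypersurface,
   tan p v    : v lies in the tangent space at p,
   nrm p      : a chosen unit normal at p, used to induce the G-orientation
                of the hypersurface from that of R^{m+1}_1. *)
Record hypersurface := Hyp {
  pt  : vec -> Prop;
  tan : vec -> vec -> Prop;
  nrm : vec -> vec }.

Definition normal (m : nat) (M : hypersurface) (p w : vec) : Prop :=
  forall v, tan M p v -> dotJ m w v = 0.

Definition lsphere (m : nat) : hypersurface :=
  Hyp (fun p => dotJ m p p = 1) (fun p v => dotJ m v p = 0) (fun p => p).

Definition affTan (m : nat) (x0 : vec) : hypersurface :=
  Hyp (fun p => dotJ m (vsub p x0) x0 = 0) (fun _ v => dotJ m v x0 = 0)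
      (fun _ => x0).

(* G-orientation preservation of A|_{T_p M} : T_p M -> T_q Mh, where the
   G-orientations of M, Mh are induced from R^{m+1}_1 by their unit normals:
   the linear map equal to A on T_p M and sending nrm M p to nrm Mh q
   belongs to G. *)
Definition preservesGor (c : Gchoice) (m : nat) (M Mh : hypersurface)
    (A : mat) (p q : vec) : Prop :=
  exists B, inG c m B /\
    (forall v, tan M p v -> vecEq m (mv m B v) (mv m A v)) /\
    vecEq m (mv m B (nrm M p)) (nrm Mh q).

Definition rolling (c : Gchoice) (m : nat) (tau : R) (M Mh : hypersurface)
    (x s : R -> vec) (A : R -> mat) : Prop :=
  let xh := fun t => gact m (s t) (A t) (x t) in
  ACv m tau x /\ ACv m tau s /\ ACm m tau A /\
  (forall t, inI tau t -> pt M (x t)) /\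
  (forall t, inI tau t -> inG c m (A t)) /\
  AE tau (fun t =>
    pt Mh (xh t) /\
    (forall v, tan M (x t) v -> tan Mh (xh t) (mv m (A t) v)) /\
    (forall w, tan Mh (xh t) w ->
       exists v, tan M (x t) v /\ vecEq m (mv m (A t) v) w) /\
    preservesGor c m M Mh (A t) (x t) (xh t) /\
    (exists xd xhd, vderiv m x t xd /\ vderiv m xh t xhd /\
       vecEq m xhd (mv m (A t) xd)) /\
    (* (v) no twisting, tangential part: A (D/dt Z) = D/dt (A Z) *)
    (forall Z : R -> vec, ACv m tau Z ->
       (forall r, inI tau r -> tan M (x r) (Z r)) ->
       forall Zd Wd, vderiv m Z t Zd ->
       vderiv m (fun r => mv m (A r) (Z r)) t Wd ->
       forall p q,
         tan M (x t) p -> normal m M (x t) (vsub Zd p) ->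
         tan Mh (xh t) q -> normal m Mh (xh t) (vsub Wd q) ->
         vecEq m (mv m (A t) p) q) /\
    (* (vi) no twisting, normal part: A (D^perp/dt Psi) = D^perp/dt (A Psi) *)
    (forall Psi : R -> vec, ACv m tau Psi ->
       (forall r, inI tau r -> normal m M (x r) (Psi r)) ->
       forall Pd Wd, vderiv m Psi t Pd ->
       vderiv m (fun r => mv m (A r) (Psi r)) t Wd ->
       forall p q,
         normal m M (x t) p -> tan M (x t) (vsub Pd p) ->
         normal m Mh (xh t) q -> tan Mh (xh t) (vsub Wd q) ->
         vecEq m (mv m (A t) p) q)).

From Pilot Require Import Defs.
From Stdlib Require Import Reals Lra Lia Classical.
From mathcomp Require ssreflect ssralg matrix.
From mathcomp.reals_stdlib Require Rstruct.
Open Scope R_scope.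

(* Along the ODE R' = R W J, with W = u x0^t - x0 u^t antisymmetric, the
   matrix R J R^t has derivative R (W + W^t) R^t = 0 almost everywhere; since
   it is absolutely continuous and equals J at t = 0 it is constantly J.  For
   an invertible R this gives R^t J R = J, i.e. R(t) in O_1(m+1), with inverse
   the J-adjoint Ntr R = J R^t J.  The entry R_00 satisfies R_00^2 >= 1 and
   det R_S never vanishes (a Schur-complement inverse exists), so both keep
   their positive sign at t = 0 by the intermediate value theorem: R(t) is in
   O^{++}.  Likewise <s, x0>_J is constant, so s stays in x0^perp.  Rolling
   conditions (i)-(vi) then reduce to pointwise J-linear algebra: Rinv = R^{-1}
   is a J-isometry carrying x = R x0 to x0, and differentiating Rinv Z gives
   Ntr(R W J) Z + Rinv Z', whose extra terms are J-orthogonal to the relevant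
   tangent or normal directions. *)

(* Finite sums sum_f_R0 F n = F 0 + ... + F n. *)

Lemma sum_shift (F : nat -> R) n :
  sum_f_R0 F (S n) = F O + sum_f_R0 (fun k => F (S k)) n.
Proof. induction n; simpl in *; [ring|]. rewrite IHn. ring. Qed.

Lemma sum_mul_l (F : nat -> R) c n :
  c * sum_f_R0 F n = sum_f_R0 (fun k => c * F k) n.
Proof. induction n; simpl; [ring|]. rewrite <- IHn. ring. Qed.

Lemma sum_mul_r (F : nat -> R) c n :
  sum_f_R0 F n * c = sum_f_R0 (fun k => F k * c) n.
Proof. induction n; simpl; [ring|]. rewrite <- IHn. ring. Qed.

Lemma sum_zero n : sum_f_R0 (fun _ => 0) n = 0.
Proof. induction n; simpl; [ring|]. rewrite IHn. ring. Qed.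

Lemma sum_swap (F : nat -> nat -> R) n p :
  sum_f_R0 (fun i => sum_f_R0 (fun j => F i j) p) n =
  sum_f_R0 (fun j => sum_f_R0 (fun i => F i j) n) p.
Proof. induction n; simpl; [reflexivity|]. rewrite IHn, <- plus_sum. reflexivity. Qed.

Lemma sum_prod (F G : nat -> R) n p :
  sum_f_R0 F n * sum_f_R0 G p = sum_f_R0 (fun i => sum_f_R0 (fun j => F i * G j) p) n.
Proof.
  rewrite sum_mul_r. apply sum_eq. intros i _. rewrite sum_mul_l. reflexivity.
Qed.

Lemma sum_delta (F : nat -> R) i n :
  (i <= n)%nat -> sum_f_R0 (fun k => if Nat.eqb i k then F k else 0) n = F i.
Proof.
  intros H. induction n.
  - replace i with O by lia. reflexivity.
  - simpl. destruct (Nat.eq_dec i (S n)) as [->|E].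
    + rewrite Nat.eqb_refl, (sum_eq _ (fun _ => 0)), sum_zero; [ring|].
      intros k Hk. replace (Nat.eqb (S n) k) with false; [reflexivity|].
      symmetry; apply Nat.eqb_neq; lia.
    + rewrite IHn by lia. replace (Nat.eqb i (S n)) with false; [ring|].
      symmetry; apply Nat.eqb_neq; lia.
Qed.

Lemma sum_delta' (F : nat -> R) i n :
  (i <= n)%nat -> sum_f_R0 (fun k => if Nat.eqb k i then F k else 0) n = F i.
Proof.
  intros H. rewrite <- (sum_delta F i n H). apply sum_eq. intros k _.
  rewrite Nat.eqb_sym. reflexivity.
Qed.

Lemma sum_nonneg_le (F : nat -> R) K K' :
  (forall k, 0 <= F k) -> (K <= K')%nat -> sum_f_R0 F K <= sum_f_R0 F K'.
Proof. intros HF HK. induction HK; [lra|]. simpl. specialize (HF (S m)). lra. Qed.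

Lemma sum_term_le (F : nat -> R) k K :
  (forall j, 0 <= F j) -> (k <= K)%nat -> F k <= sum_f_R0 F K.
Proof.
  intros HF HK. apply Rle_trans with (sum_f_R0 F k); [|apply sum_nonneg_le; auto].
  destruct k; simpl; [lra|].
  pose proof (cond_pos_sum F k HF). lra.
Qed.

Lemma sum_geom_half K : sum_f_R0 (fun k => (/2) ^ k) K = 2 - (/2) ^ K.
Proof. induction K; simpl; [lra|]. rewrite IHK. field. Qed.

Definition chain (n : nat) (a b : nat -> R) : Prop :=
  0 <= a O /\ (forall k, (k <= n)%nat -> a k <= b k) /\
  (forall k, (k < n)%nat -> b k <= a (S k)).

Lemma chain_in tau n a b : chain n a b -> b n <= tau ->
  forall k, (k <= n)%nat -> inI tau (a k) /\ inI tau (b k).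
Proof.
  intros (H0 & H1 & H2) Hn.
  assert (Hlo : forall k, (k <= n)%nat -> a O <= a k).
  { induction k as [|k IH]; intros Hk; [lra|].
    pose proof (H1 k ltac:(lia)). pose proof (H2 k ltac:(lia)).
    specialize (IH ltac:(lia)). lra. }
  assert (Hhi : forall j k, (k + j = n)%nat -> b k <= b n).
  { induction j as [|j IH]; intros k Hk; [replace k with n by lia; lra|].
    pose proof (H2 k ltac:(lia)). pose proof (H1 (S k) ltac:(lia)).
    specialize (IH (S k) ltac:(lia)). lra. }
  intros k Hk. pose proof (Hlo k Hk). pose proof (Hhi (n - k)%nat k ltac:(lia)).
  pose proof (H1 k Hk). unfold inI. lra.
Qed.

Definition upd (a : nat -> R) (n : nat) (v : R) : nat -> R :=
  fun j => if Nat.eqb j n then v else a j.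

Lemma chain_snoc n a b y z : chain n a b -> b n <= y -> y <= z ->
  chain (S n) (upd a (S n) y) (upd b (S n) z).
Proof.
  intros (H0 & H1 & H2) Hy Hz. unfold upd. repeat split.
  - exact H0.
  - intros k Hk. destruct (Nat.eqb_spec k (S n)); [lra|]. apply H1. lia.
  - intros k Hk. destruct (Nat.eqb_spec k (S n)); [lia|].
    destruct (Nat.eqb_spec (S k) (S n)) as [E|]; [injection E as ->; lra|].
    apply H2. lia.
Qed.

Lemma sum_snoc (F : R -> R -> R) (a b : nat -> R) n y z :
  sum_f_R0 (fun k => F (upd b (S n) z k) (upd a (S n) y k)) (S n) =
  sum_f_R0 (fun k => F (b k) (a k)) n + F z y.
Proof.
  simpl. unfold upd at 3 4. rewrite Nat.eqb_refl. f_equal.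
  apply sum_eq. intros i Hi. unfold upd.
  replace (Nat.eqb i (S n)) with false; [reflexivity|]. symmetry. apply Nat.eqb_neq. lia.
Qed.

Lemma AC_ext tau f g : (forall t, inI tau t -> f t = g t) -> AC tau f -> AC tau g.
Proof.
  intros Hfg H eps Heps. destruct (H eps Heps) as [d [Hd Hf]]. exists d. split; auto.
  intros n a b A0 A1 A2 A3 A4.
  pose proof (chain_in tau n a b (conj A0 (conj A1 A2)) A3) as Hin.
  rewrite (sum_eq _ (fun k => Rabs (f (b k) - f (a k)))); [apply Hf; auto|].
  intros k Hk. destruct (Hin k Hk). rewrite !Hfg; auto.
Qed.

Lemma AC_const tau c : AC tau (fun _ => c).
Proof.
  intros eps Heps. exists 1. split; [lra|]. intros.
  rewrite (sum_eq _ (fun _ => 0)), sum_zero; [lra|].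
  intros. replace (c - c) with 0 by ring. apply Rabs_R0.
Qed.

Lemma AC_plus tau f g : AC tau f -> AC tau g -> AC tau (fun t => f t + g t).
Proof.
  intros Hf Hg eps Heps.
  destruct (Hf (eps/2) ltac:(lra)) as [d1 [Hd1 H1]].
  destruct (Hg (eps/2) ltac:(lra)) as [d2 [Hd2 H2]].
  exists (Rmin d1 d2). split; [apply Rmin_pos; auto|].
  intros n a b A0 A1 A2 A3 A4.
  pose proof (Rmin_l d1 d2). pose proof (Rmin_r d1 d2).
  specialize (H1 n a b A0 A1 A2 A3 ltac:(lra)). specialize (H2 n a b A0 A1 A2 A3 ltac:(lra)).
  apply Rle_lt_trans with (sum_f_R0 (fun k =>
    Rabs (f (b k) - f (a k)) + Rabs (g (b k) - g (a k))) n); [|rewrite plus_sum; lra].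
  apply sum_Rle. intros k _.
  replace (f (b k) + g (b k) - (f (a k) + g (a k)))
    with ((f (b k) - f (a k)) + (g (b k) - g (a k))) by ring.
  apply Rabs_triang.
Qed.

Lemma AC_scal tau c f : AC tau f -> AC tau (fun t => c * f t).
Proof.
  intros Hf eps Heps. pose proof (Rabs_pos c).
  destruct (Hf (eps / (Rabs c + 1))) as [d [Hd H1]]; [apply Rdiv_lt_0_compat; lra|].
  exists d. split; auto. intros n a b A0 A1 A2 A3 A4.
  specialize (H1 n a b A0 A1 A2 A3 A4).
  rewrite (sum_eq _ (fun k => Rabs c * Rabs (f (b k) - f (a k)))),  <- sum_mul_l.
  2:{ intros. rewrite <- Rabs_mult. f_equal. ring. }
  pose proof (cond_pos_sum (fun k => Rabs (f (b k) - f (a k))) n (fun k => Rabs_pos _)).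
  apply Rmult_lt_compat_l with (r := Rabs c + 1) in H1; [|lra].
  replace ((Rabs c + 1) * (eps / (Rabs c + 1))) with eps in H1 by (field; lra). nra.
Qed.

Lemma AC_sum tau (F : nat -> R -> R) n :
  (forall k, (k <= n)%nat -> AC tau (F k)) -> AC tau (fun t => sum_f_R0 (fun k => F k t) n).
Proof.
  induction n; intros H; simpl; [apply H; lia|].
  apply AC_plus; [apply IHn; intros; apply H; lia|apply H; lia].
Qed.

(* Clamping R onto [0,tau] extends a function on [0,tau] to all of R. *)
Definition clampI (tau x : R) : R := Rmin (Rmax x 0) tau.

Lemma clampI_in tau x : 0 <= tau -> inI tau (clampI tau x).
Proof. intros. unfold clampI, inI, Rmin, Rmax. repeat destruct Rle_dec; lra. Qed.

Lemma clampI_id tau x : inI tau x -> clampI tau x = x.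
Proof. intros [H1 H2]. unfold clampI, Rmin, Rmax. repeat destruct Rle_dec; lra. Qed.

Lemma clampI_lip tau x y : 0 <= tau -> Rabs (clampI tau y - clampI tau x) <= Rabs (y - x).
Proof.
  intros. unfold clampI, Rmin, Rmax, Rabs.
  repeat destruct Rle_dec; repeat destruct Rcase_abs; lra.
Qed.

Lemma AC_unif_cont tau f : AC tau f -> forall eps, 0 < eps -> exists delta, 0 < delta /\
  forall p q, inI tau p -> inI tau q -> Rabs (p - q) < delta -> Rabs (f p - f q) < eps.
Proof.
  intros H eps Heps. destruct (H eps Heps) as [d [Hd Hf]].
  assert (Hpair : forall p q, inI tau p -> inI tau q -> q <= p -> p - q < d ->
                   Rabs (f p - f q) < eps).
  { intros p q [] [] Hqp Hpq. specialize (Hf O (fun _ => q) (fun _ => p)). simpl in Hf.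
    apply Hf; auto; intros; lia. }
  exists d. split; auto. intros p q Hp Hq Hpq. destruct (Rle_dec q p).
  - apply Hpair; auto. rewrite Rabs_right in Hpq; lra.
  - rewrite Rabs_minus_sym. apply Hpair; try lra; auto. rewrite Rabs_left in Hpq; lra.
Qed.

Lemma AC_cont_ext tau f : 0 <= tau -> AC tau f -> continuity (fun x => f (clampI tau x)).
Proof.
  intros Ht H x eps Heps. destruct (AC_unif_cont tau f H eps Heps) as [d [Hd Hf]].
  exists d. split; auto. intros y [_ Hy]. simpl in *. unfold R_dist in *.
  apply Hf; try apply clampI_in; auto.
  eapply Rle_lt_trans; [apply clampI_lip; auto|]. auto.
Qed.

(* AC functions are bounded on [0,tau] (extreme value theorem). *)
Lemma AC_bounded tau f : AC tau f -> exists M, forall t, inI tau t -> Rabs (f t) <= M.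
Proof.
  intros H. destruct (Rle_dec 0 tau) as [Ht|Ht].
  2:{ exists 0. intros t [H1 H2]. lra. }
  destruct (continuity_ab_maj (fun x => Rabs (f (clampI tau x))) 0 tau Ht) as [M [HM _]].
  { intros c _. apply (continuity_pt_comp (fun x => f (clampI tau x)) Rabs).
    - apply AC_cont_ext; auto.
    - apply Rcontinuity_abs. }
  exists (Rabs (f (clampI tau M))). intros t Hti.
  specialize (HM t Hti). rewrite clampI_id in HM; auto.
Qed.

(* Products of AC functions are AC: f g - f' g' = (f - f') g' + f (g - g'),
   with f and g bounded. *)
Lemma AC_mult tau f g : AC tau f -> AC tau g -> AC tau (fun t => f t * g t).
Proof.
  intros Hf Hg eps Heps.
  destruct (AC_bounded tau f Hf) as [Mf HMf]. destruct (AC_bounded tau g Hg) as [Mg HMg].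
  set (Mf' := Rabs Mf + 1). set (Mg' := Rabs Mg + 1).
  assert (PMf : 0 < Mf') by (unfold Mf'; pose proof (Rabs_pos Mf); lra).
  assert (PMg : 0 < Mg') by (unfold Mg'; pose proof (Rabs_pos Mg); lra).
  destruct (Hf (eps / (2 * Mg'))) as [d1 [Hd1 H1]]; [apply Rdiv_lt_0_compat; lra|].
  destruct (Hg (eps / (2 * Mf'))) as [d2 [Hd2 H2]]; [apply Rdiv_lt_0_compat; lra|].
  exists (Rmin d1 d2). split; [apply Rmin_pos; auto|].
  intros n a b A0 A1 A2 A3 A4.
  pose proof (chain_in tau n a b (conj A0 (conj A1 A2)) A3) as Hin.
  pose proof (Rmin_l d1 d2). pose proof (Rmin_r d1 d2).
  specialize (H1 n a b A0 A1 A2 A3 ltac:(lra)). specialize (H2 n a b A0 A1 A2 A3 ltac:(lra)).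
  apply Rle_lt_trans with (sum_f_R0 (fun k =>
    Mg' * Rabs (f (b k) - f (a k)) + Mf' * Rabs (g (b k) - g (a k))) n).
  - apply sum_Rle. intros k Hk. destruct (Hin k Hk) as [Ia Ib].
    replace (f (b k) * g (b k) - f (a k) * g (a k)) with
      ((f (b k) - f (a k)) * g (a k) + f (b k) * (g (b k) - g (a k))) by ring.
    eapply Rle_trans; [apply Rabs_triang|]. rewrite !Rabs_mult.
    pose proof (HMg _ Ia). pose proof (HMf _ Ib).
    pose proof (Rle_abs Mg). pose proof (Rle_abs Mf).
    pose proof (Rabs_pos (f (b k) - f (a k))). pose proof (Rabs_pos (g (b k) - g (a k))).
    unfold Mf', Mg'. nra.
  - rewrite plus_sum, <- !sum_mul_l.
    apply Rmult_lt_compat_l with (r := Mg') in H1; [|lra].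
    apply Rmult_lt_compat_l with (r := Mf') in H2; [|lra].
    replace (Mg' * (eps / (2 * Mg'))) with (eps/2) in H1 by (field; lra).
    replace (Mf' * (eps / (2 * Mf'))) with (eps/2) in H2 by (field; lra). lra.
Qed.

(* Intermediate value theorem: a nowhere vanishing AC function keeps the sign
   it has at 0. *)
Lemma sign_persist tau f : AC tau f -> (forall t, inI tau t -> f t <> 0) -> 0 < f 0 ->
  forall t, inI tau t -> 0 < f t.
Proof.
  intros H Hnz H0 t Ht.
  destruct (Rlt_dec 0 (f t)) as [|Hn]; auto. exfalso.
  assert (Hneg : f t < 0) by (pose proof (Hnz t Ht); lra).
  destruct Ht as [Ht0 Httau].
  assert (Hin : forall z, 0 <= z <= t -> inI tau z) by (intros z []; split; lra).
  destruct (IVT (fun x => - f (clampI tau x)) 0 t) as [z [Hz Hfz]].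
  - apply continuity_opp. apply AC_cont_ext; auto. lra.
  - destruct (Req_dec t 0) as [->|]; [lra|lra].
  - rewrite clampI_id by (apply Hin; lra). lra.
  - rewrite clampI_id by (apply Hin; lra). lra.
  - rewrite clampI_id in Hfz by auto. apply (Hnz z (Hin z Hz)). lra.
Qed.

(* Real induction: a property that holds at a and propagates over short
   intervals around every point of [a,b] holds at b (proved via the supremum of
   the points where it holds). *)
Lemma real_ind (a b : R) (Q : R -> Prop) : a <= b -> Q a ->
  (forall x, a <= x <= b -> exists g, 0 < g /\
     forall y z, a <= y -> y <= x -> x <= z -> z <= b -> z - y < g -> Q y -> Q z) ->
  Q b.
Proof.
  intros Hab Qa Hstep.
  set (E := fun z => a <= z <= b /\ Q z).
  assert (Hb : bound E) by (exists b; intros z [[_ Hz] _]; auto).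
  destruct (completeness E Hb (ex_intro _ a (conj (conj (Rle_refl a) Hab) Qa)))
    as [s [Hub Hlub]].
  assert (Has : a <= s) by (apply Hub; split; [lra|auto]).
  assert (Hsb : s <= b) by (apply Hlub; intros z [[_ Hz] _]; auto).
  destruct (Hstep s ltac:(lra)) as [g [Hg Hs]].
  assert (Hz : exists z, E z /\ s - g/2 < z).
  { apply NNPP. intro Hn.
    assert (Hup : is_upper_bound E (s - g/2)).
    { intros z Ez. apply Rnot_lt_le. intro. apply Hn. exists z. auto. }
    specialize (Hlub _ Hup). lra. }
  destruct Hz as [z [[[Hz1 Hz2] Qz] Hzs]].
  assert (Hzs' : z <= s) by (apply Hub; split; [lra|auto]).
  set (z' := Rmin b (s + g/2)).
  assert (Hz' : s <= z' <= b /\ z' - z < g) by (unfold z', Rmin; destruct Rle_dec; lra).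
  assert (Qz' : Q z') by (apply (Hs z z'); lra || auto).
  assert (z' <= s) by (apply Hub; split; [lra|auto]).
  replace b with z'; [exact Qz'|unfold z' in *; unfold Rmin in *; destruct Rle_dec; lra].
Qed.

Lemma deriv0_bound f x : derivable_pt_lim f x 0 -> forall eps, 0 < eps -> exists g, 0 < g /\
  forall y, Rabs (y - x) < g -> Rabs (f y - f x) <= eps * Rabs (y - x).
Proof.
  intros H eps Heps. destruct (H eps Heps) as [d Hd]. exists d. split; [apply cond_pos|].
  intros y Hy. destruct (Req_dec y x) as [->|E].
  { rewrite !Rminus_diag, Rabs_R0. lra. }
  specialize (Hd (y - x) ltac:(lra) Hy). replace (x + (y - x)) with y in Hd by ring.
  rewrite Rminus_0_r in Hd.
  replace (f y - f x) with ((f y - f x) / (y - x) * (y - x)) by (field; lra).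
  rewrite Rabs_mult. apply Rmult_le_compat_r; [apply Rabs_pos|lra].
Qed.

(* Measuring how much of a family of intervals [C k, D k], k <= K, lies to the
   left of x: coverLen is nondecreasing in x, and its increments are additive
   over the intervals. *)
Definition clampLen (C D x : R) : R := Rmin (Rmax x C) D - C.

Definition coverLen (C D : nat -> R) (K : nat) (x : R) : R :=
  sum_f_R0 (fun k => clampLen (C k) (D k) x) K.

Lemma clampLen_mono C D x y : x <= y -> 0 <= clampLen C D y - clampLen C D x.
Proof. intros. unfold clampLen, Rmin, Rmax. repeat destruct Rle_dec; lra. Qed.

Lemma coverLen_incr C D K x y : coverLen C D K y - coverLen C D K x =
  sum_f_R0 (fun k => clampLen (C k) (D k) y - clampLen (C k) (D k) x) K.
Proof. unfold coverLen. rewrite minus_sum. reflexivity. Qed.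

Lemma coverLen_mono C D K x y : x <= y -> coverLen C D K x <= coverLen C D K y.
Proof.
  intros H. pose proof (cond_pos_sum _ K (fun k => clampLen_mono (C k) (D k) x y H)).
  rewrite <- coverLen_incr in H0. lra.
Qed.

Lemma coverLen_more C D K K' x y : (K <= K')%nat -> x <= y ->
  coverLen C D K y - coverLen C D K x <= coverLen C D K' y - coverLen C D K' x.
Proof.
  intros HK Hxy. rewrite !coverLen_incr. apply sum_nonneg_le; auto.
  intro k. apply clampLen_mono. auto.
Qed.

Lemma coverLen_capture C D K k0 y z : (k0 <= K)%nat -> C k0 <= y -> y <= z -> z <= D k0 ->
  z - y <= coverLen C D K z - coverLen C D K y.
Proof.
  intros Hk H1 H2 H3. rewrite coverLen_incr.
  replace (z - y) with (clampLen (C k0) (D k0) z - clampLen (C k0) (D k0) y)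
    by (unfold clampLen, Rmin, Rmax; repeat destruct Rle_dec; lra).
  apply (sum_term_le (fun k => clampLen (C k) (D k) z - clampLen (C k) (D k) y)); auto. intro. apply clampLen_mono. lra.
Qed.

Lemma coverLen_total C D K x y : (forall k, C k <= D k) -> x <= y ->
  coverLen C D K y - coverLen C D K x <= sum_f_R0 (fun k => D k - C k) K.
Proof.
  intros HCD Hxy. rewrite coverLen_incr. apply sum_Rle. intros k _.
  specialize (HCD k). unfold clampLen, Rmin, Rmax. repeat destruct Rle_dec; lra.
Qed.

Section ZeroDerivative.
Variables (f : R -> R) (eps : R) (C D : nat -> R).
Hypothesis eps_ge0 : 0 <= eps.

(* The invariant of the real induction: the increment of f on [0,z] is
   controlled by eps * z plus the variation of f on a chain of intervals whose
   total length is bounded by the part of [0,z] covered by the [C k, D k]. *)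
Definition var_bound (z : R) : Prop :=
  exists n a b K, chain n a b /\ b n <= z /\
    sum_f_R0 (fun k => b k - a k) n <= coverLen C D K z - coverLen C D K 0 /\
    Rabs (f z - f 0) <= eps * z + sum_f_R0 (fun k => Rabs (f (b k) - f (a k))) n.

Lemma var_bound0 : var_bound 0.
Proof.
  exists O, (fun _ => 0), (fun _ => 0), O. simpl.
  repeat split; intros; try lra; try lia.
Qed.

(* Propagation across an interval [y,z] contained in a covering interval:
   [y,z] is appended to the chain. *)
Lemma var_bound_covered k0 y z : 0 <= y -> y <= z -> C k0 <= y -> z <= D k0 ->
  var_bound y -> var_bound z.
Proof.
  intros Hy Hyz HC HD [n [a [b [K (Hch & Hbn & Hlen & Hf)]]]].
  exists (S n), (upd a (S n) y), (upd b (S n) z), (Nat.max K k0).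
  split; [apply chain_snoc; auto|]. split; [unfold upd; rewrite Nat.eqb_refl; lra|].
  rewrite (sum_snoc (fun p q => p - q)), (sum_snoc (fun p q => Rabs (f p - f q))).
  split.
  - pose proof (coverLen_more C D K (Nat.max K k0) 0 y (Nat.le_max_l _ _) Hy).
    pose proof (coverLen_capture C D (Nat.max K k0) k0 y z (Nat.le_max_r _ _) HC Hyz HD).
    lra.
  - replace (f z - f 0) with ((f z - f y) + (f y - f 0)) by ring.
    pose proof (Rabs_triang (f z - f y) (f y - f 0)).
    assert (eps * y <= eps * z) by nra. lra.
Qed.

Lemma var_bound_regular x y z : y <= x -> x <= z ->
  Rabs (f y - f x) <= eps * (x - y) -> Rabs (f z - f x) <= eps * (z - x) ->
  var_bound y -> var_bound z.
Proof.
  intros Hyx Hxz Hy Hz [n [a [b [K (Hch & Hbn & Hlen & Hf)]]]].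
  exists n, a, b, K. split; [exact Hch|]. split; [lra|]. split.
  - pose proof (coverLen_mono C D K y z ltac:(lra)). lra.
  - replace (f z - f 0) with ((f z - f x) + (f x - f y) + (f y - f 0)) by ring.
    pose proof (Rabs_triang ((f z - f x) + (f x - f y)) (f y - f 0)).
    pose proof (Rabs_triang (f z - f x) (f x - f y)).
    rewrite (Rabs_minus_sym (f x)) in *. lra.
Qed.

End ZeroDerivative.

(* Quantitative core of the vanishing-derivative theorem: covering the
   exceptional null set by intervals of total length below the AC modulus
   delta, real induction yields |f t - f 0| <= eps t + eps. *)
Lemma AC_deriv0_bound tau f N : AC tau f -> null N ->
  (forall t, inI tau t -> ~ N t -> derivable_pt_lim f t 0) ->
  forall t, inI tau t -> forall eps, 0 < eps -> Rabs (f t - f 0) <= eps * t + eps.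
Proof.
  intros Hac Hnull Hder t1 Ht1 eps Heps.
  destruct (Hac eps Heps) as [delta [Hdelta Hac']].
  destruct (Hnull (delta/2) ltac:(lra)) as [c [d [Hcd [Hcov Hsum]]]].
  (* enlarging [c k, d k] by e k on each side makes covered points interior *)
  set (e := fun k => delta / 8 * (/2) ^ k).
  assert (He : forall k, 0 < e k).
  { intro k. unfold e. pose proof (pow_lt (/2) k ltac:(lra)). nra. }
  set (C := fun k => c k - e k). set (D := fun k => d k + e k).
  assert (HCD : forall k, C k <= D k).
  { intro k. unfold C, D. specialize (Hcd k). specialize (He k). lra. }
  assert (Hlen : forall K, sum_f_R0 (fun k => D k - C k) K < delta).
  { intro K. rewrite (sum_eq _ (fun k => (d k - c k) + delta / 4 * (/2) ^ k))
      by (intros; unfold D, C, e; field).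
    rewrite plus_sum, <- sum_mul_l, sum_geom_half.
    specialize (Hsum K). pose proof (pow_lt (/2) K ltac:(lra)). nra. }
  destruct Ht1 as [Ht1 Ht1tau].
  assert (Hvb : var_bound f eps C D t1).
  { apply (real_ind 0 t1); [lra|apply var_bound0|].
    intros x Hx. destruct (classic (N x)) as [Nx|Nx].
    - destruct (Hcov x Nx) as [k0 Hk0]. exists (e k0). split; [auto|].
      intros y z Hy Hyx Hxz _ Hyz.
      apply (var_bound_covered f eps C D ltac:(lra) k0); unfold C, D; lra.
    - destruct (deriv0_bound f x (Hder x ltac:(split; lra) Nx) eps Heps) as [g [Hg Hgb]].
      exists g. split; [auto|]. intros y z Hy Hyx Hxz _ Hyz.
      apply (var_bound_regular f eps C D x); auto.
      + pose proof (Hgb y ltac:(rewrite Rabs_left1; lra)) as Hb.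
        rewrite (Rabs_left1 (y - x)) in Hb; nra.
      + pose proof (Hgb z ltac:(rewrite Rabs_right; lra)) as Hb.
        rewrite (Rabs_right (z - x)) in Hb; nra. }
  destruct Hvb as [n [a [b [K ((A0 & A1 & A2) & Hbn & Hl & Hf)]]]].
  pose proof (coverLen_total C D K 0 t1 HCD Ht1). specialize (Hlen K).
  specialize (Hac' n a b A0 A1 A2 ltac:(lra) ltac:(lra)). lra.
Qed.

Lemma AC_deriv0 tau f N : AC tau f -> null N ->
  (forall t, inI tau t -> ~ N t -> derivable_pt_lim f t 0) ->
  forall t, inI tau t -> f t = f 0.
Proof.
  intros Hac Hnull Hder t Ht.
  destruct (Req_dec (f t - f 0) 0) as [E|E]; [lra|exfalso].
  pose proof (Rabs_pos_lt _ E) as Hp. destruct Ht as [Ht0 Httau].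
  set (eps := Rabs (f t - f 0) / (2 * (t + 1))).
  assert (Heps : 0 < eps) by (apply Rdiv_lt_0_compat; lra).
  pose proof (AC_deriv0_bound tau f N Hac Hnull Hder t (conj Ht0 Httau) eps Heps) as Hb.
  replace (eps * t + eps) with (Rabs (f t - f 0) / 2) in Hb by (unfold eps; field; lra).
  lra.
Qed.

(* The Laplace-expansion determinant [det] agrees with MathComp's determinant
   of the corresponding n x n matrix; this transfers multiplicativity,
   det I = 1 and invariance under transposition. *)
Module DetBridge.
Import ssreflect ssrbool ssrfun eqtype ssrnat fintype bigop ssralg matrix Rstruct.
Import GRing.Theory.
Local Open Scope ring_scope.

Definition toM (n : nat) (A : mat) : 'M[R]_n := \matrix_(i < n, j < n) A i j.

Lemma sum_f_R0_big (f : nat -> R) n : sum_f_R0 f n = \sum_(i < n.+1) f i.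
Proof.
  elim: n => [|n IH]; first by rewrite big_ord_recr big_ord0 /= add0r.
  by rewrite big_ord_recr /= -IH.
Qed.

Lemma pow_m1 (j : nat) : Rpow_def.pow (-1)%R j = (-1) ^+ j.
Proof. elim: j => [|j IH] //=. by rewrite exprS IH. Qed.

Lemma det_toM n (A : mat) : det n A = \det (toM n A).
Proof.
  elim: n A => [|n IH] A; first by rewrite /= det_mx00.
  rewrite (expand_det_row _ ord0) /= sum_f_R0_big.
  apply: eq_bigr => j _.
  rewrite /cofactor /toM mxE IH pow_m1 add0n.
  have -> : toM n (minor0 j A) = row' ord0 (col' j (\matrix_(i < n.+1, k < n.+1) A i k)).
    apply/matrixP => k l. rewrite /toM !mxE /minor0 /= /bump leq0n.
    case: (ltnP l j) => Hl.
    + by have -> : Nat.ltb l j = true by apply/PeanoNat.Nat.ltb_lt; apply/ltP.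
    + by have -> : Nat.ltb l j = false by apply/PeanoNat.Nat.ltb_ge; apply/leP.
  by rewrite mulrCA mulrA.
Qed.

Lemma toM_ext n (A B : mat) : (forall i j, lt i n -> lt j n -> A i j = B i j) ->
  toM n A = toM n B.
Proof. move=> H. apply/matrixP => i j. rewrite /toM !mxE. by apply: H; apply/ltP. Qed.

Lemma det_trm_toM n (A : mat) : \det (toM n (trm A)) = \det (toM n A).
Proof.
  have -> : toM n (trm A) = (toM n A)^T by apply/matrixP => i j; rewrite /toM !mxE.
  exact: det_tr.
Qed.

Lemma det_mm_toM n (A B : mat) :
  \det (toM n.+1 (mm n A B)) = Rmult (\det (toM n.+1 A)) (\det (toM n.+1 B)).
Proof.
  have -> : toM n.+1 (mm n A B) = toM n.+1 A *m toM n.+1 B.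
    apply/matrixP => i j. rewrite /toM !mxE /mm sum_f_R0_big.
    apply: eq_bigr => k _. by rewrite !mxE.
  exact: det_mulmx.
Qed.

Lemma det_I_toM n : \det (toM n Imat) = R1.
Proof.
  have -> : toM n Imat = 1%:M.
    apply/matrixP => i j. rewrite /toM !mxE /Imat.
    case: (PeanoNat.Nat.eqb_spec i j) => H.
    - have -> : i = j by apply: val_inj.
      by rewrite eqxx.
    - have -> : (i == j) = false by apply/negP => /eqP E; apply: H; rewrite E.
      by [].
  exact: det1.
Qed.
End DetBridge.

Lemma det_ext n (A B : mat) : (forall i j, (i < n)%nat -> (j < n)%nat -> A i j = B i j) ->
  det n A = det n B.
Proof. intros H. rewrite !DetBridge.det_toM. f_equal. apply DetBridge.toM_ext; auto. Qed.

Lemma det_mm n (A B : mat) : det (S n) (mm n A B) = det (S n) A * det (S n) B.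
Proof. rewrite !DetBridge.det_toM. apply DetBridge.det_mm_toM. Qed.

Lemma det_I n : det n Imat = 1.
Proof. rewrite DetBridge.det_toM. apply DetBridge.det_I_toM. Qed.

Lemma det_trm n (A : mat) : det n (trm A) = det n A.
Proof. rewrite !DetBridge.det_toM. apply DetBridge.det_trm_toM. Qed.

Lemma matEq_refl m A : matEq m A A.
Proof. intros i j _ _. reflexivity. Qed.
Lemma matEq_sym m A B : matEq m A B -> matEq m B A.
Proof. intros H i j Hi Hj. symmetry. auto. Qed.
Lemma matEq_trans m A B C : matEq m A B -> matEq m B C -> matEq m A C.
Proof. intros H1 H2 i j Hi Hj. rewrite H1; auto. Qed.
Lemma vecEq_refl m a : vecEq m a a.
Proof. intros i _. reflexivity. Qed.
Lemma vecEq_sym m a b : vecEq m a b -> vecEq m b a.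
Proof. intros H i Hi. symmetry. auto. Qed.
Lemma vecEq_trans m a b c : vecEq m a b -> vecEq m b c -> vecEq m a c.
Proof. intros H1 H2 i Hi. rewrite H1; auto. Qed.

Lemma mm_compat m A A' B B' : matEq m A A' -> matEq m B B' -> matEq m (mm m A B) (mm m A' B').
Proof. intros H1 H2 i j Hi Hj. unfold mm. apply sum_eq. intros k Hk. rewrite H1, H2; auto. Qed.

Lemma mv_compat m A A' a a' : matEq m A A' -> vecEq m a a' -> vecEq m (mv m A a) (mv m A' a').
Proof. intros H1 H2 i Hi. unfold mv. apply sum_eq. intros k Hk. rewrite H1, H2; auto. Qed.

Lemma mm_assoc m A B C : matEq m (mm m (mm m A B) C) (mm m A (mm m B C)).
Proof.
  intros i l _ _. unfold mm.
  rewrite (sum_eq _ (fun j => sum_f_R0 (fun k => A i k * B k j * C j l) m))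
    by (intros; apply sum_mul_r).
  rewrite sum_swap. apply sum_eq. intros k _. rewrite sum_mul_l. apply sum_eq. intros; ring.
Qed.

Lemma mv_mm m A B a : vecEq m (mv m (mm m A B) a) (mv m A (mv m B a)).
Proof.
  intros i _. unfold mv, mm.
  rewrite (sum_eq _ (fun j => sum_f_R0 (fun k => A i k * B k j * a j) m))
    by (intros; apply sum_mul_r).
  rewrite sum_swap. apply sum_eq. intros k _. rewrite sum_mul_l. apply sum_eq. intros; ring.
Qed.

Lemma mm_I_l m A : matEq m (mm m Imat A) A.
Proof.
  intros i j Hi Hj. unfold mm, Imat. rewrite <- (sum_delta (fun k => A k j) i m Hi).
  apply sum_eq. intros k _. destruct (Nat.eqb i k); ring.
Qed.

Lemma mm_I_r m A : matEq m (mm m A Imat) A.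
Proof.
  intros i j Hi Hj. unfold mm, Imat. rewrite <- (sum_delta' (fun k => A i k) j m Hj).
  apply sum_eq. intros k _. destruct (Nat.eqb k j); ring.
Qed.

Lemma mv_I m a : vecEq m (mv m Imat a) a.
Proof.
  intros i Hi. unfold mv, Imat. rewrite <- (sum_delta a i m Hi).
  apply sum_eq. intros k _. destruct (Nat.eqb i k); ring.
Qed.

Lemma inv_unique m Z X Y : matEq m (mm m Z X) Imat -> matEq m (mm m X Y) Imat -> matEq m Z Y.
Proof.
  intros H1 H2.
  apply matEq_trans with (mm m Z (mm m X Y)).
  { apply matEq_trans with (mm m Z Imat); [apply matEq_sym, mm_I_r|].
    apply mm_compat; [apply matEq_refl|apply matEq_sym; auto]. }
  apply matEq_trans with (mm m (mm m Z X) Y); [apply matEq_sym, mm_assoc|].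
  apply matEq_trans with (mm m Imat Y); [apply mm_compat; [auto|apply matEq_refl]|].
  apply mm_I_l.
Qed.

Lemma mv_inv m A B a : matEq m (mm m A B) Imat -> vecEq m (mv m A (mv m B a)) a.
Proof.
  intros H. eapply vecEq_trans; [apply vecEq_sym, mv_mm|].
  eapply vecEq_trans; [apply mv_compat; [exact H|apply vecEq_refl]|apply mv_I].
Qed.

Lemma Jsign_sq i : Jsign i * Jsign i = 1.
Proof. destruct i; simpl; ring. Qed.

Lemma dotJ_ext m a a' b b' : vecEq m a a' -> vecEq m b b' -> dotJ m a b = dotJ m a' b'.
Proof. intros H1 H2. unfold dotJ. apply sum_eq. intros. rewrite H1, H2; auto. Qed.

Lemma dotJ_sym m a b : dotJ m a b = dotJ m b a.
Proof. unfold dotJ. apply sum_eq. intros; ring. Qed.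

Lemma dotJ_add_l m a b v : dotJ m (fun i => a i + b i) v = dotJ m a v + dotJ m b v.
Proof. unfold dotJ. rewrite <- plus_sum. apply sum_eq. intros; ring. Qed.

Lemma dotJ_sub_l m a b v : dotJ m (vsub a b) v = dotJ m a v - dotJ m b v.
Proof. unfold dotJ, vsub. rewrite <- minus_sum. apply sum_eq. intros; ring. Qed.

Lemma dotJ_comb m a b c1 c2 v :
  dotJ m (fun i => a i * c1 - b i * c2) v = c1 * dotJ m a v - c2 * dotJ m b v.
Proof. unfold dotJ. rewrite !sum_mul_l, <- minus_sum. apply sum_eq. intros; ring. Qed.

Definition evec (i : nat) : vec := fun k => if Nat.eqb k i then 1 else 0.

Lemma dotJ_evec m a i : (i <= m)%nat -> dotJ m a (evec i) = Jsign i * a i.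
Proof.
  intros H. unfold dotJ, evec. rewrite <- (sum_delta' (fun k => Jsign k * a k) i m H).
  apply sum_eq. intros k _. destruct (Nat.eqb k i); ring.
Qed.

(* Nondegeneracy: with <n,n>_J = 1, R^{m+1} = n^perp (+) R n, so a vector
   J-orthogonal to n^perp and to n vanishes. *)
Lemma orth_zero m n w : dotJ m n n = 1 ->
  (forall v, dotJ m v n = 0 -> dotJ m w v = 0) -> dotJ m w n = 0 -> vecEq m w vzero.
Proof.
  intros Hn Hperp Hwn i Hi.
  set (v := fun k => evec i k * 1 - n k * dotJ m (evec i) n).
  assert (Hv : dotJ m v n = 0) by (unfold v; rewrite dotJ_comb, Hn; ring).
  specialize (Hperp v Hv). unfold v in Hperp.
  rewrite dotJ_sym, dotJ_comb, !(dotJ_sym m _ w), Hwn, dotJ_evec in Hperp by auto.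
  unfold vzero. destruct i; simpl in Hperp; lra.
Qed.

Lemma vecEq_sub_zero m a b : vecEq m (vsub a b) vzero -> vecEq m a b.
Proof. intros H i Hi. specialize (H i Hi). unfold vsub, vzero in H. lra. Qed.

(* J-orthogonal matrices.  [rowform] says X J X^t = J and [colform] says
   X^t J X = J (membership in O_1(m+1)); Ntr X = J X^t J is the J-adjoint,
   which inverts X in either case. *)
Definition rowform m (X : mat) : Prop := forall i j, (i <= m)%nat -> (j <= m)%nat ->
  sum_f_R0 (fun k => Jsign k * X i k * X j k) m = Jmat i j.
Definition colform m (X : mat) : Prop := forall i j, (i <= m)%nat -> (j <= m)%nat ->
  sum_f_R0 (fun k => Jsign k * X k i * X k j) m = Jmat i j.
Definition Ntr (X : mat) : mat := fun i j => Jsign i * X j i * Jsign j.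

Lemma Jmat_sign i j : Jmat i j * Jsign j = Imat i j.
Proof. unfold Jmat, Imat. destruct (Nat.eqb_spec i j); [subst; apply Jsign_sq|ring]. Qed.

Lemma sign_Imat i j : Jsign i * Imat i j = Jmat i j.
Proof. unfold Jmat, Imat. destruct (Nat.eqb_spec i j); ring. Qed.

Lemma Jmat_signs i j : Jsign i * Jsign j * Jmat i j = Jmat i j.
Proof. unfold Jmat. destruct (Nat.eqb_spec i j); [subst; rewrite Jsign_sq|]; ring. Qed.

Lemma colform_ext m A B : matEq m A B -> colform m A -> colform m B.
Proof. intros E H i j Hi Hj. rewrite <- (H i j Hi Hj). apply sum_eq. intros. rewrite !E; auto. Qed.

Lemma row_inv m X : rowform m X -> matEq m (mm m X (Ntr X)) Imat.
Proof.
  intros H i j Hi Hj. unfold mm, Ntr. rewrite <- Jmat_sign, <- (H i j Hi Hj), sum_mul_r.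
  apply sum_eq. intros; ring.
Qed.

Lemma inv_col m X : matEq m (mm m (Ntr X) X) Imat -> colform m X.
Proof.
  intros H i j Hi Hj. rewrite <- sign_Imat, <- (H i j Hi Hj). unfold mm, Ntr.
  rewrite sum_mul_l. apply sum_eq. intros k _.
  replace (Jsign i * (Jsign i * X k i * Jsign k * X k j))
    with ((Jsign i * Jsign i) * (Jsign k * X k i * X k j)) by ring.
  rewrite Jsign_sq. ring.
Qed.

(* For an invertible matrix, X J X^t = J implies X^t J X = J, since the
   inverse of X must then be Ntr X. *)
Lemma row_GL_col m X : rowform m X -> GLmat m X -> colform m X.
Proof.
  intros H [Y [_ HYX]]. apply inv_col.
  assert (E : matEq m Y (Ntr X)) by (apply (inv_unique m Y X); auto; apply row_inv; auto).
  apply matEq_trans with (mm m Y X); auto.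
  apply mm_compat; [apply matEq_sym; auto|apply matEq_refl].
Qed.

Lemma col_O1 m X : colform m X -> O1 m X.
Proof.
  intros H i j Hi Hj. rewrite <- (H i j Hi Hj). unfold mm, trm. apply sum_eq. intros k Hk.
  transitivity (X k i * (Jsign k * X k j)); [f_equal|ring].
  rewrite <- (sum_delta (fun l => Jsign l * X l j) k m Hk). apply sum_eq. intros l _.
  unfold Jmat. destruct (Nat.eqb_spec k l); subst; ring.
Qed.

Lemma row_col_Ntr m X : rowform m X -> colform m (Ntr X).
Proof.
  intros H i j Hi Hj. unfold Ntr.
  rewrite <- Jmat_signs, <- (H i j Hi Hj), sum_mul_l. apply sum_eq. intros k _.
  replace (Jsign k * (Jsign k * X i k * Jsign i) * (Jsign k * X j k * Jsign j)) with
    ((Jsign k * Jsign k) * (Jsign i * Jsign j * (Jsign k * X i k * X j k))) by ring.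
  rewrite Jsign_sq. ring.
Qed.

Lemma col_dot m X a b : colform m X -> dotJ m (mv m X a) (mv m X b) = dotJ m a b.
Proof.
  intros H. unfold dotJ, mv.
  rewrite (sum_eq _ (fun i => sum_f_R0 (fun j =>
             sum_f_R0 (fun k => Jsign i * X i j * X i k * a j * b k) m) m)).
  2:{ intros i _. rewrite Rmult_assoc, sum_prod, sum_mul_l. apply sum_eq. intros j _.
      rewrite sum_mul_l. apply sum_eq. intros; ring. }
  rewrite sum_swap. apply sum_eq. intros j Hj. rewrite sum_swap.
  rewrite <- (sum_delta (fun k => Jsign j * a j * b k) j m Hj).
  apply sum_eq. intros k Hk.
  rewrite (sum_eq _ (fun i => Jsign i * X i j * X i k * (a j * b k))) by (intros; ring).
  rewrite <- sum_mul_r, H by auto. unfold Jmat. destruct (Nat.eqb j k); ring.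
Qed.

(* From X J X^t = J, row 0 gives X_00^2 = 1 + sum of squares >= 1. *)
Lemma row_T00 m X : rowform m X -> 1 <= X O O * X O O.
Proof.
  intros H. specialize (H O O (Nat.le_0_l _) (Nat.le_0_l _)).
  unfold Jmat in H. rewrite Nat.eqb_refl in H. destruct m as [|m]; [simpl in H; nra|].
  rewrite sum_shift in H. simpl Jsign in H.
  assert (0 <= sum_f_R0 (fun k => 1 * X O (S k) * X O (S k)) m).
  { apply cond_pos_sum. intros k. nra. }
  lra.
Qed.

(* The space block: if X J X^t = J then X_S is invertible, with explicit
   inverse (X_S)^t - (X_S0)(X_0S)/X_00 (Schur complement identity), so
   det X_S <> 0. *)
Definition blockInv (X : mat) : mat :=
  fun k j => X (S j) (S k) - X O (S k) * X (S j) O / X O O.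

Lemma row_blockS_inv m' X : rowform (S m') X ->
  matEq m' (mm m' (blockS X) (blockInv X)) Imat.
Proof.
  intros H i j Hi Hj.
  pose proof (row_T00 _ X H) as Ha. assert (Ha0 : X O O <> 0) by (intro E; rewrite E in Ha; lra).
  pose proof (H (S i) (S j) ltac:(lia) ltac:(lia)) as H1.
  pose proof (H (S i) O ltac:(lia) ltac:(lia)) as H2.
  rewrite sum_shift in H1, H2. simpl Jsign in H1, H2.
  rewrite (sum_eq _ (fun k => X (S i) (S k) * X (S j) (S k))) in H1 by (intros; ring).
  rewrite (sum_eq _ (fun k => X (S i) (S k) * X O (S k))) in H2 by (intros; ring).
  unfold Jmat in H1, H2. simpl Nat.eqb in H1, H2. simpl Jsign in H1.
  unfold mm, blockS, blockInv.
  rewrite (sum_eq _ (fun k => X (S i) (S k) * X (S j) (S k)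
                      - (X (S j) O / X O O) * (X (S i) (S k) * X O (S k))))
    by (intros; field; auto).
  rewrite minus_sum, <- sum_mul_l.
  replace (sum_f_R0 (fun k => X (S i) (S k) * X O (S k)) m') with (X (S i) O * X O O) by lra.
  unfold Imat. destruct (Nat.eqb i j).
  - replace (sum_f_R0 (fun k => X (S i) (S k) * X (S j) (S k)) m')
      with (1 + X (S i) O * X (S j) O) by lra.
    field. auto.
  - replace (sum_f_R0 (fun k => X (S i) (S k) * X (S j) (S k)) m')
      with (X (S i) O * X (S j) O) by lra.
    field. auto.
Qed.

Lemma row_det_nz m X : (1 <= m)%nat -> rowform m X -> det m (blockS X) <> 0.
Proof.
  intros Hm H. destruct m as [|m']; [lia|].
  assert (E : det (S m') (mm m' (blockS X) (blockInv X)) = 1).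
  { rewrite <- (det_I (S m')). apply det_ext. intros i j Hi Hj.
    apply row_blockS_inv; auto; lia. }
  rewrite det_mm in E. intro Z. rewrite Z in E. lra.
Qed.

Lemma det_at_I m (X : mat) : matEq m X Imat -> det m (blockS X) = 1.
Proof.
  intros H. rewrite <- (det_I m). apply det_ext. intros i j Hi Hj. unfold blockS.
  rewrite H by lia. reflexivity.
Qed.

Lemma Opp_ext m X Y : matEq m X Y -> Opp m X -> Opp m Y.
Proof.
  intros E (HO & HT & HS). split; [|split].
  - intros i j Hi Hj. rewrite <- (HO i j Hi Hj). apply mm_compat; auto.
    + intros k l Hk Hl. unfold trm. symmetry. auto.
    + apply mm_compat; [apply matEq_refl|apply matEq_sym; auto].
  - unfold blockT in *. rewrite <- E by lia. auto.
  - rewrite <- (det_ext m (blockS X)); auto. intros i j Hi Hj. apply E; lia.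
Qed.

(* O^{++} is closed under the J-adjoint: Ntr X has the same time entry as X
   and its space block is the transpose of that of X. *)
Lemma Opp_Ntr m X : rowform m X -> Opp m X -> Opp m (Ntr X).
Proof.
  intros Hrow (_ & HT & HS). split; [|split].
  - apply col_O1, row_col_Ntr. auto.
  - unfold blockT, Ntr in *. simpl. lra.
  - rewrite (det_ext m _ (trm (blockS X))), det_trm; auto.
    intros i j _ _. unfold blockS, Ntr, trm. simpl. ring.
Qed.

Lemma deriv_sum (F : nat -> R -> R) (Fd : nat -> R) t n :
  (forall k, (k <= n)%nat -> derivable_pt_lim (F k) t (Fd k)) ->
  derivable_pt_lim (fun r => sum_f_R0 (fun k => F k r) n) t (sum_f_R0 Fd n).
Proof.
  induction n; intros H; simpl; [apply H; lia|].
  apply (derivable_pt_lim_plus (fun r => sum_f_R0 (fun k => F k r) n) (F (S n))).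
  - apply IHn. intros; apply H; lia.
  - apply H; lia.
Qed.

Lemma deriv_l_eq f t l l' : derivable_pt_lim f t l -> l = l' -> derivable_pt_lim f t l'.
Proof. intros H E. subst. auto. Qed.

Lemma deriv_loc tau f g t l : 0 < t < tau -> (forall r, inI tau r -> f r = g r) ->
  derivable_pt_lim f t l -> derivable_pt_lim g t l.
Proof.
  intros Ht E H eps Heps. destruct (H eps Heps) as [d Hd].
  assert (Hp : 0 < Rmin d (Rmin t (tau - t))).
  { apply Rmin_pos; [apply cond_pos|apply Rmin_pos; lra]. }
  exists (mkposreal _ Hp). intros h Hh0 Hh. simpl in Hh.
  pose proof (Rmin_l d (Rmin t (tau - t))). pose proof (Rmin_r d (Rmin t (tau - t))).
  pose proof (Rmin_l t (tau - t)). pose proof (Rmin_r t (tau - t)).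
  rewrite <- !E; [apply Hd; auto; lra|split; lra|].
  unfold Rabs in Hh; destruct Rcase_abs in Hh; split; lra.
Qed.

Lemma mv_deriv m A Ad Z Zd t : mderiv m A t Ad -> vderiv m Z t Zd ->
  vderiv m (fun r => mv m (A r) (Z r)) t (fun i => mv m Ad (Z t) i + mv m (A t) Zd i).
Proof.
  intros HA HZ i Hi. unfold mv. rewrite <- plus_sum.
  apply (deriv_sum (fun k r => A r i k * Z r k)). intros k Hk.
  apply derivable_pt_lim_mult; auto.
Qed.

Lemma mv_deriv_const m A Ad a t : mderiv m A t Ad ->
  vderiv m (fun r => mv m (A r) a) t (mv m Ad a).
Proof.
  intros HA i Hi. unfold mv. apply (deriv_sum (fun k r => A r i k * a k)). intros k Hk.
  eapply deriv_l_eq; [apply derivable_pt_lim_mult; [apply HA; auto|apply derivable_pt_lim_const]|].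
  cbv beta. ring.
Qed.

Lemma mderiv_Ntr m A Ad t : mderiv m A t Ad -> mderiv m (fun r => Ntr (A r)) t (Ntr Ad).
Proof.
  intros H i j Hi Hj. unfold Ntr. eapply deriv_l_eq.
  - apply derivable_pt_lim_mult; [|apply derivable_pt_lim_const].
    apply derivable_pt_lim_mult; [apply derivable_pt_lim_const|apply H; auto].
  - cbv beta. ring.
Qed.

Lemma null_add_point N p : null N -> null (fun t => N t \/ t = p).
Proof.
  intros H eps Heps. destruct (H eps Heps) as [c [d [H1 [H2 H3]]]].
  exists (fun k => match k with O => p | S k => c k end).
  exists (fun k => match k with O => p | S k => d k end).
  split; [|split].
  - intros [|k]; [lra|auto].
  - intros t [Nt| ->]; [destruct (H2 t Nt) as [k Hk]; exists (S k); auto|exists O; lra].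
  - intros [|n]; [simpl; lra|]. rewrite sum_shift. specialize (H3 n). simpl. lra.
Qed.

Lemma mmJ m A l k : (k <= m)%nat -> mm m A Jmat l k = A l k * Jsign k.
Proof.
  intros Hk. unfold mm, Jmat. rewrite <- (sum_delta' (fun p => A l p * Jsign p) k m Hk).
  apply sum_eq. intros p _. destruct (Nat.eqb p k); ring.
Qed.

Lemma wedgeJ_mv m u x0 y : vecEq m (mv m (mm m (wedge u x0) Jmat) y)
  (fun i => u i * dotJ m x0 y - x0 i * dotJ m u y).
Proof.
  intros i Hi. unfold mv, dotJ. rewrite !sum_mul_l, <- minus_sum.
  apply sum_eq. intros k Hk. rewrite mmJ by auto. unfold wedge. ring.
Qed.

(* Since W is antisymmetric, (R W J) J R^t + R J (R W J)^t = R (W + W^t) R^t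
   vanishes: the derivative of R J R^t along the ODE is zero. *)
Lemma deriv_alg m (R : mat) u x0 i j : (i <= m)%nat -> (j <= m)%nat ->
  let Rp := mm m R (mm m (wedge u x0) Jmat) in
  sum_f_R0 (fun k => Jsign k * (Rp i k * R j k + R i k * Rp j k)) m = 0.
Proof.
  intros Hi Hj Rp.
  assert (E : forall a k, (k <= m)%nat ->
            Jsign k * Rp a k = sum_f_R0 (fun l => R a l * wedge u x0 l k) m).
  { intros a k Hk. unfold Rp, mm at 1. rewrite sum_mul_l. apply sum_eq. intros l _.
    rewrite mmJ by auto. replace (Jsign k * (R a l * (wedge u x0 l k * Jsign k)))
      with ((Jsign k * Jsign k) * (R a l * wedge u x0 l k)) by ring.
    rewrite Jsign_sq. ring. }
  rewrite (sum_eq _ (fun k => sum_f_R0 (fun l => R i l * wedge u x0 l k * R j k) m +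
                              sum_f_R0 (fun l => R i k * R j l * wedge u x0 l k) m)).
  2:{ intros k Hk. rewrite Rmult_plus_distr_l.
      replace (Jsign k * (Rp i k * R j k)) with ((Jsign k * Rp i k) * R j k) by ring.
      replace (Jsign k * (R i k * Rp j k)) with (R i k * (Jsign k * Rp j k)) by ring.
      rewrite !E, sum_mul_r, sum_mul_l by auto. f_equal; apply sum_eq; intros; ring. }
  rewrite plus_sum, (sum_swap (fun k l => R i k * R j l * wedge u x0 l k)), <- plus_sum.
  transitivity (sum_f_R0 (fun _ => 0) m); [|apply sum_zero]. apply sum_eq. intros k _.
  rewrite <- plus_sum. transitivity (sum_f_R0 (fun _ => 0) m); [|apply sum_zero].
  apply sum_eq. intros l _. unfold wedge. ring.
Qed.

Lemma ntr_deriv_alg m (R : mat) u x0 z :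
  vecEq m (mv m (Ntr (mm m R (mm m (wedge u x0) Jmat))) z)
    (fun i => x0 i * dotJ m u (mv m (Ntr R) z) - u i * dotJ m x0 (mv m (Ntr R) z)).
Proof.
  intros i Hi.
  set (T := fun k => sum_f_R0 (fun j => R j k * Jsign j * z j) m).
  transitivity (sum_f_R0 (fun k => wedge u x0 k i * T k) m).
  - unfold mv, Ntr, mm at 1, T.
    rewrite (sum_eq _ (fun j => sum_f_R0 (fun k => R j k * wedge u x0 k i * Jsign j * z j) m)).
    2:{ intros j Hj. rewrite sum_mul_l, sum_mul_r, sum_mul_r. apply sum_eq. intros k _.
        rewrite mmJ by auto.
        replace (Jsign i * (R j k * (wedge u x0 k i * Jsign i)) * Jsign j * z j) with
          ((Jsign i * Jsign i) * (R j k * wedge u x0 k i * Jsign j * z j)) by ring.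
        rewrite Jsign_sq. ring. }
    rewrite sum_swap. apply sum_eq. intros k _. rewrite sum_mul_l. apply sum_eq. intros; ring.
  - unfold dotJ. rewrite !sum_mul_l, <- minus_sum. apply sum_eq. intros k Hk.
    assert (Ey : mv m (Ntr R) z k = Jsign k * T k).
    { unfold mv, Ntr, T. rewrite sum_mul_l. apply sum_eq. intros; ring. }
    rewrite Ey. unfold wedge.
    replace (x0 i * (Jsign k * u k * (Jsign k * T k)) - u i * (Jsign k * x0 k * (Jsign k * T k)))
      with ((Jsign k * Jsign k) * ((u k * x0 i - x0 k * u i) * T k)) by ring.
    rewrite Jsign_sq. ring.
Qed.

Lemma AC_mv m tau (A : R -> mat) (a : R -> vec) :
  ACm m tau A -> ACv m tau a -> ACv m tau (fun t => mv m (A t) (a t)).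
Proof.
  intros HA Ha i Hi. unfold mv. apply (AC_sum tau (fun j t => A t i j * a t j)).
  intros j Hj. apply AC_mult; auto.
Qed.

Lemma AC_det tau n : forall (A : R -> mat),
  (forall i j, (i < n)%nat -> (j < n)%nat -> AC tau (fun t => A t i j)) ->
  AC tau (fun t => det n (A t)).
Proof.
  induction n; intros A H; simpl; [apply AC_const|].
  apply (AC_sum tau (fun j t => (-1) ^ j * A t O j * det n (minor0 j (A t)))).
  intros j Hj. apply AC_mult; [apply AC_scal, H; lia|].
  apply (IHn (fun t => minor0 j (A t))). intros i k Hi Hk. unfold minor0.
  destruct (Nat.ltb k j); apply H; lia.
Qed.

Section RollingSolution.
Variables (m : nat) (x0 : vec) (tau : R) (u s : R -> vec) (Rm : R -> mat) (N : R -> Prop).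
Hypotheses (Hm : (1 <= m)%nat) (Hx0 : dotJ m x0 x0 = 1)
  (Hux : forall t, inI tau t -> dotJ m (u t) x0 = 0)
  (Hs : ACv m tau s) (HR : ACm m tau Rm) (HGL : forall t, inI tau t -> GLmat m (Rm t))
  (HN : null N)
  (HAE : forall t, inI tau t -> ~ N t -> vderiv m s t (u t) /\
           mderiv m Rm t (mm m (Rm t) (mm m (wedge (u t) x0) Jmat)))
  (Hs0 : vecEq m (s 0) vzero) (HR0 : matEq m (Rm 0) Imat).

(* R J R^t has zero derivative a.e. and equals J at t = 0. *)
Lemma solution_rowform t : inI tau t -> rowform m (Rm t).
Proof.
  intros Ht i j Hi Hj.
  set (g := fun r => sum_f_R0 (fun k => Jsign k * Rm r i k * Rm r j k) m).
  assert (Hg0 : g 0 = Jmat i j).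
  { unfold g. rewrite <- sign_Imat, <- (sum_delta (fun k => Jsign k * Imat k j) i m Hi).
    apply sum_eq. intros k Hk. rewrite !HR0 by auto. unfold Imat.
    destruct (Nat.eqb_spec i k), (Nat.eqb_spec j k), (Nat.eqb_spec k j);
      subst; try lia; ring. }
  change (g t = Jmat i j). rewrite <- Hg0. apply (AC_deriv0 tau g N); auto.
  - apply (AC_sum tau (fun k r => Jsign k * Rm r i k * Rm r j k)).
    intros k Hk. apply AC_mult; [apply AC_scal|]; apply HR; auto.
  - intros r Hr HNr. destruct (HAE r Hr HNr) as [_ Hd].
    eapply deriv_l_eq; [|exact (deriv_alg m (Rm r) (u r) x0 i j Hi Hj)].
    apply (deriv_sum (fun k q => Jsign k * Rm q i k * Rm q j k)). intros k Hk.
    eapply deriv_l_eq.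
    + apply derivable_pt_lim_mult; [|apply Hd; auto].
      apply derivable_pt_lim_mult; [apply derivable_pt_lim_const|apply Hd; auto].
    + cbv beta. ring.
Qed.

Lemma solution_colform t : inI tau t -> colform m (Rm t).
Proof. intros Ht. apply row_GL_col; [apply solution_rowform|apply HGL]; auto. Qed.

(* R(t) stays in O^{++}: it lies in O_1(m+1), and the continuous quantities
   R_00 (with R_00^2 >= 1) and det R_S (nonzero) keep their sign from t = 0,
   where R = I. *)
Lemma solution_Opp t : inI tau t -> Opp m (Rm t).
Proof.
  intros Ht. assert (H0 : inI tau 0) by (destruct Ht; split; lra).
  split; [apply col_O1, solution_colform; auto|split].
  - apply (sign_persist tau (fun t => Rm t O O)); auto.
    + apply HR; lia.
    + intros r Hr E. pose proof (row_T00 m _ (solution_rowform r Hr)). rewrite E in H. lra.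
    + rewrite HR0 by lia. unfold Imat. simpl. lra.
  - apply (sign_persist tau (fun t => det m (blockS (Rm t)))); auto.
    + apply (AC_det tau m (fun t => blockS (Rm t))). intros i j Hi Hj. apply HR; lia.
    + intros r Hr. apply row_det_nz, solution_rowform; auto.
    + rewrite det_at_I; auto. lra.
Qed.

(* s stays in x0^perp, since s(0) = 0 and <s', x0>_J = <u, x0>_J = 0 a.e. *)
Lemma solution_s_perp t : inI tau t -> dotJ m (s t) x0 = 0.
Proof.
  intros Ht. set (g := fun r => dotJ m (s r) x0).
  assert (Hg0 : g 0 = 0).
  { unfold g, dotJ. transitivity (sum_f_R0 (fun _ => 0) m); [|apply sum_zero].
    apply sum_eq. intros k Hk.
    rewrite Hs0 by auto. unfold vzero. ring. }
  change (g t = 0). rewrite <- Hg0. apply (AC_deriv0 tau g N); auto.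
  - apply (AC_sum tau (fun k r => Jsign k * s r k * x0 k)).
    intros k Hk. apply AC_mult; [apply AC_scal, Hs; auto|apply AC_const].
  - intros r Hr HNr. destruct (HAE r Hr HNr) as [Hd _].
    rewrite <- (Hux r Hr). unfold g, dotJ.
    apply (deriv_sum (fun k q => Jsign k * s q k * x0 k)). intros k Hk.
    eapply deriv_l_eq.
    + apply derivable_pt_lim_mult; [|apply derivable_pt_lim_const].
      apply derivable_pt_lim_mult; [apply derivable_pt_lim_const|apply Hd; auto].
    + cbv beta. ring.
Qed.

Variable Rinv : R -> mat.
Hypothesis HRinv : forall t, inI tau t ->
  matEq m (mm m (Rinv t) (Rm t)) Imat /\ matEq m (mm m (Rm t) (Rinv t)) Imat.

Lemma Rinv_Ntr t : inI tau t -> matEq m (Rinv t) (Ntr (Rm t)).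
Proof.
  intros Ht. apply (inv_unique m (Rinv t) (Rm t)); [apply HRinv|apply row_inv, solution_rowform]; auto.
Qed.

Lemma Rinv_colform t : inI tau t -> colform m (Rinv t).
Proof.
  intros Ht. apply (colform_ext m (Ntr (Rm t))); [apply matEq_sym, Rinv_Ntr; auto|].
  apply row_col_Ntr, solution_rowform. auto.
Qed.

Lemma Rinv_Opp t : inI tau t -> Opp m (Rinv t).
Proof.
  intros Ht. apply (Opp_ext m (Ntr (Rm t))); [apply matEq_sym, Rinv_Ntr; auto|].
  apply Opp_Ntr; [apply solution_rowform|apply solution_Opp]; auto.
Qed.

Lemma Rinv_AC : ACm m tau Rinv.
Proof.
  intros i j Hi Hj. apply (AC_ext tau (fun t => Jsign i * Rm t j i * Jsign j)).
  - intros t Ht. rewrite Rinv_Ntr; auto.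
  - apply AC_mult; [apply AC_scal, HR; auto|apply AC_const].
Qed.

Lemma Rinv_x t : inI tau t -> vecEq m (mv m (Rinv t) (mv m (Rm t) x0)) x0.
Proof. intros Ht. apply mv_inv, HRinv. auto. Qed.

Lemma development t : inI tau t ->
  vecEq m (gact m (s t) (Rinv t) (mv m (Rm t) x0)) (vadd (s t) x0).
Proof. intros Ht i Hi. unfold gact, vadd. rewrite Rinv_x; auto. Qed.

Lemma Rinv_adj t a v : inI tau t -> dotJ m (mv m (Rinv t) a) v = dotJ m a (mv m (Rm t) v).
Proof.
  intros Ht. rewrite <- (col_dot m (Rinv t) a (mv m (Rm t) v)) by (apply Rinv_colform; auto).
  apply dotJ_ext; [apply vecEq_refl|]. apply vecEq_sym, mv_inv, HRinv. auto.
Qed.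

Lemma Rm_isometry t a b : inI tau t -> dotJ m (mv m (Rm t) a) (mv m (Rm t) b) = dotJ m a b.
Proof. intros Ht. apply col_dot, solution_colform. auto. Qed.

Lemma tangent_map t ph v : inI tau t -> Defs.tan (lsphere m) (mv m (Rm t) x0) v ->
  Defs.tan (affTan m x0) ph (mv m (Rinv t) v).
Proof. simpl. intros Ht Hv. rewrite Rinv_adj; auto. Qed.

Lemma tangent_onto t ph w : inI tau t -> Defs.tan (affTan m x0) ph w ->
  exists v, Defs.tan (lsphere m) (mv m (Rm t) x0) v /\ vecEq m (mv m (Rinv t) v) w.
Proof.
  simpl. intros Ht Hw. exists (mv m (Rm t) w). split.
  - rewrite Rm_isometry; auto.
  - apply mv_inv, HRinv. auto.
Qed.

(* No slipping: the development s + x0 has velocity u = Rinv (R' x0), because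
   R' x0 = R (W J x0) and W J x0 = u <x0,x0>_J - x0 <u,x0>_J = u. *)
Lemma no_slip t : 0 < t < tau -> ~ N t ->
  exists xd xhd, vderiv m (fun r => mv m (Rm r) x0) t xd /\
    vderiv m (fun r => gact m (s r) (Rinv r) (mv m (Rm r) x0)) t xhd /\
    vecEq m xhd (mv m (Rinv t) xd).
Proof.
  intros Htt HNt. assert (Ht : inI tau t) by (unfold inI; lra).
  destruct (HAE t Ht HNt) as [Hsd HRd].
  exists (mv m (mm m (Rm t) (mm m (wedge (u t) x0) Jmat)) x0), (u t). split; [|split].
  - apply mv_deriv_const. auto.
  - intros i Hi. apply (deriv_loc tau (fun r => s r i + x0 i)); auto.
    + intros r Hr. symmetry. apply development; auto.
    + eapply deriv_l_eq; [apply derivable_pt_lim_plus; [apply Hsd; auto|apply derivable_pt_lim_const]|ring].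
  - apply vecEq_sym. eapply vecEq_trans; [apply mv_compat; [apply matEq_refl|apply mv_mm]|].
    eapply vecEq_trans; [apply mv_inv, HRinv; auto|].
    eapply vecEq_trans; [apply wedgeJ_mv|].
    intros i Hi. rewrite Hx0, (Hux t Ht). ring.
Qed.

(* Derivative of a field Z transported by Rinv: since Rinv = J R^t J,
   (Rinv Z)' = Ntr(R W J) Z + Rinv Z'. *)
Lemma transport_deriv t Z Zd Wd : 0 < t < tau -> ~ N t -> vderiv m Z t Zd ->
  vderiv m (fun r => mv m (Rinv r) (Z r)) t Wd -> forall v,
  dotJ m Wd v = dotJ m (u t) (mv m (Rinv t) (Z t)) * dotJ m x0 v
                - dotJ m x0 (mv m (Rinv t) (Z t)) * dotJ m (u t) v
                + dotJ m (mv m (Rinv t) Zd) v.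
Proof.
  intros Htt HNt HZd HWd v. assert (Ht : inI tau t) by (unfold inI; lra).
  destruct (HAE t Ht HNt) as [_ HRd].
  assert (EN : forall a, vecEq m (mv m (Ntr (Rm t)) a) (mv m (Rinv t) a)).
  { intro a. apply mv_compat; [apply matEq_sym, Rinv_Ntr; auto|apply vecEq_refl]. }
  assert (EW : vecEq m Wd (fun i =>
    mv m (Ntr (mm m (Rm t) (mm m (wedge (u t) x0) Jmat))) (Z t) i + mv m (Ntr (Rm t)) Zd i)).
  { intros i Hi. apply (uniqueness_limite (fun r => mv m (Rinv r) (Z r) i) t); [apply HWd; auto|].
    apply (deriv_loc tau (fun r => mv m (Ntr (Rm r)) (Z r) i)); auto.
    - intros r Hr. apply mv_compat; [apply matEq_sym, Rinv_Ntr; auto|apply vecEq_refl|auto].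
    - apply (mv_deriv m (fun r => Ntr (Rm r))); auto. apply mderiv_Ntr. auto. }
  rewrite (dotJ_ext m _ _ v v EW (vecEq_refl m v)), dotJ_add_l.
  rewrite (dotJ_ext m _ _ v v (ntr_deriv_alg m (Rm t) (u t) x0 (Z t)) (vecEq_refl m v)).
  rewrite dotJ_comb, (dotJ_ext m _ _ v v (EN Zd) (vecEq_refl m v)).
  rewrite (dotJ_ext m (u t) (u t) _ _ (vecEq_refl m _) (EN (Z t))).
  rewrite (dotJ_ext m x0 x0 _ _ (vecEq_refl m _) (EN (Z t))). ring.
Qed.

(* No twisting, tangential part: for Z tangent along x, Rinv maps the
   tangential projection p of Z' to the tangential projection q of
   (Rinv Z)'.  Their difference is J-orthogonal both to x0^perp and to x0. *)
Lemma no_twist_tangential t ph (Z : R -> vec) Zd Wd p q : 0 < t < tau -> ~ N t ->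
  (forall r, inI tau r -> Defs.tan (lsphere m) (mv m (Rm r) x0) (Z r)) ->
  vderiv m Z t Zd -> vderiv m (fun r => mv m (Rinv r) (Z r)) t Wd ->
  Defs.tan (lsphere m) (mv m (Rm t) x0) p -> normal m (lsphere m) (mv m (Rm t) x0) (vsub Zd p) ->
  Defs.tan (affTan m x0) ph q -> normal m (affTan m x0) ph (vsub Wd q) ->
  vecEq m (mv m (Rinv t) p) q.
Proof.
  unfold normal. simpl. intros Htt HNt HZ HZd HWd Hp Hpn Hq Hqn.
  assert (Ht : inI tau t) by (unfold inI; lra).
  apply vecEq_sub_zero, (orth_zero m x0); auto.
  - intros v Hv. specialize (Hqn v Hv).
    rewrite dotJ_sub_l, (transport_deriv t Z Zd Wd Htt HNt HZd HWd v) in Hqn.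
    assert (HRv : dotJ m (mv m (Rm t) v) (mv m (Rm t) x0) = 0) by (rewrite Rm_isometry; auto).
    specialize (Hpn _ HRv). rewrite dotJ_sub_l in Hpn.
    rewrite (dotJ_sym m x0 (mv m (Rinv t) (Z t))), (dotJ_sym m x0 v), !Rinv_adj in Hqn by auto.
    rewrite dotJ_sub_l, Rinv_adj by auto. rewrite HZ, Hv in Hqn by auto. lra.
  - rewrite dotJ_sub_l, Rinv_adj, Hp, Hq by auto. ring.
Qed.

(* No twisting, normal part: the same statement for fields Psi normal along x;
   the component along x0 is controlled by <u, Rinv Psi>_J = <R u, Psi>_J = 0. *)
Lemma no_twist_normal t ph (Psi : R -> vec) Pd Wd p q : 0 < t < tau -> ~ N t ->
  (forall r, inI tau r -> normal m (lsphere m) (mv m (Rm r) x0) (Psi r)) ->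
  vderiv m Psi t Pd -> vderiv m (fun r => mv m (Rinv r) (Psi r)) t Wd ->
  normal m (lsphere m) (mv m (Rm t) x0) p -> Defs.tan (lsphere m) (mv m (Rm t) x0) (vsub Pd p) ->
  normal m (affTan m x0) ph q -> Defs.tan (affTan m x0) ph (vsub Wd q) ->
  vecEq m (mv m (Rinv t) p) q.
Proof.
  unfold normal. simpl. intros Htt HNt HPsi HPd HWd Hp Hpt Hq Hqt.
  assert (Ht : inI tau t) by (unfold inI; lra).
  assert (HRtan : forall v, dotJ m v x0 = 0 -> dotJ m (mv m (Rm t) v) (mv m (Rm t) x0) = 0)
    by (intros v Hv; rewrite Rm_isometry; auto).
  apply vecEq_sub_zero, (orth_zero m x0); auto.
  - intros v Hv. rewrite dotJ_sub_l, Rinv_adj, (Hq v Hv), (Hp _ (HRtan v Hv)) by auto. ring.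
  - rewrite dotJ_sub_l in Hpt, Hqt.
    rewrite (transport_deriv t Psi Pd Wd Htt HNt HPd HWd x0), Hx0, (Hux t Ht) in Hqt.
    assert (Hu : dotJ m (u t) (mv m (Rinv t) (Psi t)) = 0).
    { rewrite dotJ_sym, Rinv_adj by auto. apply HPsi; auto. }
    rewrite Hu, Rinv_adj in Hqt by auto.
    rewrite dotJ_sub_l, Rinv_adj by auto. lra.
Qed.

Lemma rolling_solution c :
  rolling c m tau (lsphere m) (affTan m x0) (fun t => mv m (Rm t) x0) s Rinv.
Proof.
  split; [apply AC_mv; [exact HR|intros i _; apply AC_const]|].
  split; [exact Hs|]. split; [exact Rinv_AC|].
  split; [intros t Ht; simpl; rewrite Rm_isometry; auto|].
  split; [intros t Ht; destruct c; left; apply Rinv_Opp; auto|].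
  exists (fun t => (N t \/ t = 0) \/ t = tau).
  split; [apply null_add_point, null_add_point, HN|].
  intros t Ht HN'. assert (HNt : ~ N t) by tauto.
  assert (Htt : 0 < t < tau).
  { destruct Ht. split; apply Rnot_le_lt; intro; apply HN'; [left; right|right]; lra. }
  split; [|split; [|split; [|split; [|split; [|split]]]]].
  - simpl. rewrite <- (solution_s_perp t Ht). apply dotJ_ext; [|apply vecEq_refl].
    intros i Hi. unfold vsub, gact, vadd. rewrite Rinv_x; auto. ring.
  - intros v Hv. apply (tangent_map t _ v Ht Hv).
  - intros w Hw. apply (tangent_onto t _ w Ht Hw).
  - exists (Rinv t). split; [destruct c; left; apply Rinv_Opp; auto|].
    split; [intros; apply vecEq_refl|apply Rinv_x; auto].
  - apply no_slip; auto.
  - intros Z _ HZ Zd Wd HZd HWd p q. apply (no_twist_tangential t _ Z Zd Wd); auto.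
  - intros Psi _ HPsi Pd Wd HPd HWd p q. apply (no_twist_normal t _ Psi Pd Wd); auto.
Qed.

End RollingSolution.

Theorem mainTheorem2 (m : nat) (x0 : vec) (tau : R) (u s : R -> vec)
    (Rm : R -> mat) :
  (1 <= m)%nat ->
  pt (lsphere m) x0 ->
  ACv m tau u ->
  (forall t, inI tau t -> dotJ m (u t) x0 = 0) ->
  ACv m tau s -> ACm m tau Rm ->
  (forall t, inI tau t -> GLmat m (Rm t)) ->
  AE tau (fun t => vderiv m s t (u t) /\
                   mderiv m Rm t (mm m (Rm t) (mm m (wedge (u t) x0) Jmat))) ->
  vecEq m (s 0) vzero ->
  matEq m (Rm 0) Imat ->
  (forall t, inI tau t -> Opp m (Rm t)) /\
  forall Rinv : R -> mat,
    (forall t, inI tau t ->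
       matEq m (mm m (Rinv t) (Rm t)) Imat /\
       matEq m (mm m (Rm t) (Rinv t)) Imat) ->
    (forall c : Gchoice,
       rolling c m tau (lsphere m) (affTan m x0)
         (fun t => mv m (Rm t) x0) s Rinv) /\
    (forall t, inI tau t ->
       vecEq m (gact m (s t) (Rinv t) (mv m (Rm t) x0)) (vadd (s t) x0)).
Proof.
  intros Hm Hx0 _ Hux Hs HR HGL [N [HN HAE]] Hs0 HR0.
  split; [intros t Ht; apply (solution_Opp m x0 tau u s Rm N); auto|].
  intros Rinv HRinv. split.
  - intro c. apply (rolling_solution m x0 tau u s Rm N); auto.
  - apply development. auto.
Qed.
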